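(* Consider an infinite execution $\gamma_0\gamma_1\ldots$ of the unison dynamics augmented with the infimum registers (as in the context), with $\gamma_0$ satisfying $WU_0$, in which every process increments its clock infinitely often; let $\bot_0$, $\widetilde{p^t.r}$ and $t_{p,k}$ be as in the context. Let $U$ be an integer with $U\delta\ge\bot_0+D+1$, and let $k\in\{1,\dots,\varrho\}$. Then for every $p\in V$, in the configuration $\gamma_{t_{p,U\delta+k}}$, $p.v_1=\bigoplus\{q.v_0: q\in V(p,k-1)\}$ and $p.v_2=\bigoplus\{q.v_0: q\in V(p,k)\}$.
   Context: Let $G=(V,E)$ be a finite connected undirected graph, $|V|=n\ge 2$, $\mathcal N_p$ the set of neighbors of $p$, $d(p,q)$ the hop distance, $D$ the diameter, and $V(p,r)=\{q\in V: d(p,q)\le r\}$. Fix integers $\varrho\ge1$, $\delta=\varrho+1$, and $M\ge3$ a multiple of $\delta$; for an integer $a$, $\bar a\in\{0,\dots,M-1\}$ is its residue modulo $M$. Each process $p$ holds a clock $p.r\in\{0,\dots,M-1\}$; $p^t.r$ is its value in $\gamma_t$. Integers $a,b$ are locally comparable if $\min(\overline{a-b},\overline{b-a})\le1$, and then $b\ominus a=\overline{b-a}$ if $\overline{b-a}\le1$, else $-\overline{a-b}$. $WU$: for every edge $\{p,q\}$, $p.r,q.r$ are locally comparable. The delay of a path $p_0\ldots p_k$ is $\sum_{i<k}(p_{i+1}.r\ominus p_i.r)$. $WU_0$: $WU$ holds and all paths between any $p,q$ have the same delay $\delta_{(p,q)}$ ($\delta^t_{(p,q)}$ in $\gamma_t$).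 Let $\oplus$ be an associative, commutative, idempotent binary operation on a set $\mathbb S$; $\bigoplus$ of a finite nonempty set is the $\oplus$ of its elements. Each process $p$ has registers $p.v_0,p.v_1,p.v_2\in\mathbb S$, where $p.v_0$ is never modified. Dynamics: $p$ is enabled iff for every $q\in\mathcal N_p$, $q.r=p.r$ or $q.r=\overline{p.r+1}$. In a transition $\gamma_t\to\gamma_{t+1}$ a nonempty set of processes enabled in $\gamma_t$ is chosen (by an arbitrary daemon); each chosen $p$, reading the values of $\gamma_t$, does: if $p.r\equiv\varrho \pmod\delta$ then $p.v_1:=p.v_0$, $p.v_2:=p.v_0$; otherwise $p.v_1:=p.v_2$ and $p.v_2:=p.v_0\oplus\bigoplus\{q.v_{\omega(q)}:q\in\mathcal N_p\}$, where $\omega(q)=2$ if $q.r=p.r$ and $\omega(q)=1$ if $q.r=\overline{p.r+1}$; then $p.r:=\overline{p.r+1}$. Other processes are unchanged. Lifting: choose $p_0$ with $\delta^0_{(p_0,q)}\ge0$ for all $q$, let $\bot_0=p_0^0.r$, set $\widetilde{p^0.r}=\bot_0+\delta^0_{(p_0,p)}$, and $\widetilde{p^{t+1}.r}=\widetilde{p^t.r}+1$ if $p$ increments in $\gamma_t\to\gamma_{t+1}$, else $\widetilde{p^{t+1}.r}=\widetilde{p^t.r}$. For an integer $k$, $t_{p,k}$ is the smallest $t$ with $\widetilde{p^t.r}=k$. *)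

From mathcomp Require Import all_boot all_order all_algebra.
Set Implicit Arguments. Unset Strict Implicit. Unset Printing Implicit Defensive.
Import GRing.Theory Num.Theory.

Section Defs.
Variable T : finType.

Fixpoint within (e : rel T) (k : nat) (p q : T) : bool :=
  match k with
  | 0 => p == q
  | k'.+1 => within e k' p q || [exists x, within e k' p x && e x q]
  end.

(* hop distance: least k with a walk of length <= k (graph assumed connected,
   so k < #|T| always exists) *)
Definition dist (e : rel T) (p q : T) : nat :=
  find (fun k => within e k p q) (iota 0 #|T|).

Definition diam (e : rel T) : nat := \max_(p : T) \max_(q : T) dist e p q.

Definition ball (e : rel T) (p : T) (r : nat) : {set T} :=
  [set q | dist e p q <= r].

Definition resM (M : nat) (z : int) : nat := absz (z %% (Posz M))%Z.

Definition loc_comp (M : nat) (a b : int) : bool :=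
  minn (resM M (a - b)%R) (resM M (b - a)%R) <= 1.

Definition ominus (M : nat) (b a : int) : int :=
  if resM M (b - a)%R <= 1 then Posz (resM M (b - a)%R) else (- Posz (resM M (a - b)%R))%R.

Fixpoint delay (M : nat) (r : T -> nat) (x : T) (s : seq T) : int :=
  match s with
  | [::] => 0%R
  | y :: s' => (ominus M (Posz (r y)) (Posz (r x)) + delay M r y s')%R
  end.

Definition WU (M : nat) (e : rel T) (r : T -> nat) : Prop :=
  forall p q, e p q -> loc_comp M (Posz (r p)) (Posz (r q)).

Variable S : Type.

Record config := Config { cr : T -> nat; cv1 : T -> S; cv2 : T -> S }.

Definition bigS (op : S -> S -> S) (x : S) (s : seq S) : S := foldr op x s.

(* (+){ f q : q in A } for a nonempty set A (d is an irrelevant default) *)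
Definition bigset (op : S -> S -> S) (f : T -> S) (A : {set T}) (d : S) : S :=
  match enum A with
  | [::] => d
  | a :: s => bigS op (f a) (map f s)
  end.

Definition enabled (M : nat) (e : rel T) (c : config) (p : T) : Prop :=
  forall q, e p q -> cr c q = cr c p \/ cr c q = (cr c p).+1 %% M.

Definition step (M rho : nat) (e : rel T) (op : S -> S -> S) (v0 : T -> S)
  (c : config) (A : {set T}) : config :=
  Config
    (fun p => if p \in A then (cr c p).+1 %% M else cr c p)
    (fun p => if p \in A then
                (if cr c p %% rho.+1 == rho then v0 p else cv2 c p)
              else cv1 c p)
    (fun p => if p \in A then
                (if cr c p %% rho.+1 == rho then v0 p else
                   bigS op (v0 p)
                     [seq (if cr c q == cr c p then cv2 c q else cv1 c q)
                     | q <- enum [set q | e p q]])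
              else cv2 c p).

(* lifted clock: base p = bot0 + delta^0_(p0,p) *)
Fixpoint clift (sel : nat -> {set T}) (base : T -> int) (p : T) (t : nat) : int :=
  match t with
  | 0 => base p
  | t'.+1 => (clift sel base p t' + Posz (p \in sel t'))%R
  end.

End Defs.

(* The lifted clock L t q of q is its initial value bot0 + delta0(p0, q) plus
   the number of increments of q before time t.  Two invariants hold at all
   times:
   - lifting: L t q reduces modulo M to the clock of q, and lifted clocks of
     neighbours differ by at most one.  Initially this follows from delays
     being congruent to clock differences and edge delays being <= 1; it is
     preserved because, as M >= 3, the neighbours of an enabled process sit
     at its lifted clock or one above, with equal clocks iff equal lifts;
   - registers: if L t q = U delta + j with j <= rho, then
     q.v1 = (+)V(q, j-1) and q.v2 = (+)V(q, j).  It holds vacuously at time 0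
     since initial lifted clocks are at most bot0 + D < U delta.  A step at
     lifted clock U delta - 1 has residue rho and resets both registers; a
     later step reads from each neighbour the infimum over V(x, j) and uses
     V(q, j+1) = {q} u U_{x ~ q} V(x, j).
   Fairness makes the lifted clock of p an unbounded unit-step counter, so it
   hits U delta + k, and at the first such time the register invariant
   applies. *)

From mathcomp Require Import all_boot all_order all_algebra zify.
Import Order.TTheory GRing.Theory Num.Theory.
Set Implicit Arguments. Unset Strict Implicit. Unset Printing Implicit Defensive.

Section Balls.
Variables (T : finType) (e : rel T).
Hypothesis e_conn : forall p q : T, connect e p q.

Lemma within_mono k k' p q : k <= k' -> within e k p q -> within e k' p q.
Proof.
move=> /subnK <-; elim: (k' - k) => [|m IH] // h.
by rewrite addSn /= IH.
Qed.

Lemma withinP k p q :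
  within e k p q <-> exists s, [/\ path e p s, last p s = q & size s <= k].
Proof.
split.
- elim: k q => [|k IH] q /=; first by move/eqP=> <-; exists [::].
  case/orP=> [/IH [s [hp hl hs]] | /existsP [x /andP [/IH [s [hp hl hs]] hx]]].
  + by exists s; split=> //; apply: leqW.
  + by exists (rcons s q); rewrite rcons_path last_rcons size_rcons hl hp hx.
- case=> s []; elim/last_ind: s k q => [|s y IH] k q /=.
  + by move=> _ <- _; apply: (@within_mono 0) => //=.
  + rewrite rcons_path last_rcons size_rcons => /andP [hs hy] <-.
    case: k => // k hk /=; apply/orP; right; apply/existsP; exists (last p s).
    by rewrite hy andbT; apply: IH.
Qed.

Lemma within_conn p q : within e #|T|.-1 p q.
Proof.
case/connectP: (e_conn p q) => s hp ->.
have [s' hp' hu _] := shortenP hp.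
apply/withinP; exists s'; split=> //.
have := max_card (mem (p :: s')); move/card_uniqP: hu => ->.
by case: #|T|.
Qed.

Lemma dist_leP p q r : (dist e p q <= r) = within e r p q.
Proof.
have hT : 0 < #|T| by apply/card_gt0P; exists p.
have hhas : has (fun k => within e k p q) (iota 0 #|T|).
  apply/hasP; exists #|T|.-1; last exact: within_conn.
  by rewrite mem_iota add0n /=; case: #|T| hT.
have hlt := hhas; rewrite has_find size_iota in hlt.
have hdist := nth_find 0 hhas; rewrite nth_iota // add0n in hdist.
apply/idP/idP => h; first exact: within_mono h hdist.
rewrite leqNgt; apply/negP => hr.
have := before_find 0 hr; rewrite nth_iota ?add0n ?h //.
exact: ltn_trans hr hlt.
Qed.

Lemma in_ball p r q : (q \in ball e p r) = within e r p q.
Proof. by rewrite inE dist_leP. Qed.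

Lemma in_ball_self p r : p \in ball e p r.
Proof. by rewrite in_ball; apply: (@within_mono 0) => //=. Qed.

Lemma ball0 p : ball e p 0 = [set p].
Proof. by apply/setP => q; rewrite in_ball !inE /= eq_sym. Qed.

Lemma ballS p r :
  ball e p r.+1 = p |: \bigcup_(x in [set x | e p x]) ball e x r.
Proof.
apply/setP => q; rewrite in_ball !inE; apply/idP/idP.
- case/withinP => [[|x s] [hp hl hs]]; first by rewrite -hl /= eqxx.
  move: hp => /= /andP [hx hs']; apply/orP; right.
  apply/bigcupP; exists x; first by rewrite inE.
  by rewrite in_ball; apply/withinP; exists s.
- case/orP => [/eqP -> | /bigcupP [x]]; first by apply: (@within_mono 0) => //=.
  rewrite inE in_ball => hx /withinP [s [hp hl hs]].
  by apply/withinP; exists (x :: s); rewrite /= hx hp.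
Qed.

Lemma dist_le_diam p q : dist e p q <= diam e.
Proof.
apply: leq_trans (@leq_bigmax T (fun q => dist e p q) q) _.
exact: (@leq_bigmax T (fun p => \max_(q : T) dist e p q) p).
Qed.

End Balls.

Section SetFold.
Variables (T : finType) (S : Type) (op : S -> S -> S).
Hypotheses (opA : associative op) (opC : commutative op) (opI : idempotent_op op).

(* Adjoining a unit None to the ACI operation yields a commutative monoid, so
   the folds [bigset] become genuine big operators over sets. *)
Local Notation oop := (oAC opA opC).

Lemma oAC_idem : idempotent_op oop.
Proof. by case=> // x; rewrite oACE opI. Qed.

Lemma foldr_oAC (I : Type) (f : I -> S) x s :
  Some (foldr op x (map f s)) = oop (Some x) (\big[oop/None]_(q <- s) Some (f q)).
Proof.
elim: s => [|y s IH]; first by rewrite big_nil.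
by rewrite big_cons /= -oACE IH; exact: Monoid.mulmCA.
Qed.

Definition obig (f : T -> S) (A : {set T}) : option S :=
  \big[oop/None]_(q in A) Some (f q).

Lemma bigsetE f A d : A != set0 -> Some (bigset op f A d) = obig f A.
Proof.
move=> hA; rewrite /bigset /obig -big_enum /=.
case E: (enum A) => [|a s]; last by rewrite big_cons /bigS foldr_oAC.
by move: hA; rewrite -cards_eq0 cardE E.
Qed.

(* Idempotence is what makes the fold additive over overlapping unions. *)
Lemma obigU f : {morph obig f : A B / A :|: B >-> oop A B}.
Proof. by move=> A B; apply: big_setU oAC_idem. Qed.

Lemma obig0 f : obig f set0 = None.
Proof. by rewrite /obig big_set0. Qed.

Variable e : rel T.
Hypothesis e_conn : forall p q : T, connect e p q.

Lemma bigset_ballS (v0 : T -> S) p r (g : T -> S) :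
  (forall x, e p x -> g x = bigset op v0 (ball e x r) (v0 x)) ->
  bigS op (v0 p) [seq g q | q <- enum [set q | e p q]] =
  bigset op v0 (ball e p r.+1) (v0 p).
Proof.
move=> hg; apply: Some_inj.
have ball_neq0 x r' : ball e x r' != set0.
  by apply/set0Pn; exists x; apply: in_ball_self.
rewrite bigsetE // ballS // obigU /bigS foldr_oAC big_enum /=.
congr (oop _ _); first by rewrite /obig big_set1.
rewrite (big_morph (obig v0) (obigU v0) (obig0 v0)).
by apply: eq_bigr => x; rewrite inE => hx; rewrite hg // bigsetE.
Qed.

End SetFold.

Section Delays.
Variables (T : finType) (M : nat) (r : T -> nat).

Lemma ominus_le1 (a b : int) : (ominus M b a <= 1)%R.
Proof.
rewrite /ominus; case: ifP => hres; first by rewrite lez_nat.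
by apply: le_trans (_ : 0 <= 1)%R => //; rewrite oppr_le0.
Qed.

Lemma delay_rcons x s y :
  delay M r x (rcons s y) = (delay M r x s + ominus M (r y) (r (last x s)))%R.
Proof. by elim: s x => [|z s IH] x /=; rewrite ?add0r ?addr0 ?IH ?addrA. Qed.

Lemma delay_le_size x s : (delay M r x s <= (size s)%:Z)%R.
Proof.
elim: s x => [|y s IH] x //=.
by rewrite intS; apply: lerD; [apply: ominus_le1 | apply: IH].
Qed.

Hypothesis M_gt0 : 0 < M.

Lemma ominus_mod (a b : int) : ((ominus M b a) %% M)%Z = ((b - a) %% M)%Z.
Proof.
have hM : (M%:Z != 0)%R by case: M M_gt0.
rewrite /ominus /resM; case: ifP => _.
- by rewrite gez0_abs ?modz_ge0 // modz_mod.
- by rewrite gez0_abs ?modz_ge0 // modzNm opprB.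
Qed.

Lemma delay_mod x s :
  ((delay M r x s) %% M)%Z = (((r (last x s))%:Z - (r x)%:Z) %% M)%Z.
Proof.
elim: s x => [|y s IH] x /=; first by rewrite subrr.
rewrite -modzDm IH ominus_mod modzDm; congr (_ %% _)%Z; lia.
Qed.

End Delays.

Lemma modz_shift_neq (M : nat) (a : int) (c : nat) : 0 < c < M ->
  ((a %% M)%Z != ((a + c%:Z) %% M)%Z).
Proof.
case/andP=> c_gt0 c_ltM; apply/negP => /eqP h.
have : (M%:Z %| (a - (a + c%:Z))%R)%Z by rewrite -eqz_mod_dvd; apply/eqP.
rewrite opprD addrA subrr add0r dvdzE /= abszN /=.
by move/(dvdn_leq c_gt0); rewrite leqNgt c_ltM.
Qed.

Lemma modz_mod_dvd (M d : nat) (x : int) : d %| M ->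
  ((x %% M)%Z %% d)%Z = (x %% d)%Z.
Proof.
case/dvdnP=> c ->.
by rewrite {2}(divz_eq x (c * d)%N%:Z) PoszM mulrA modzMDl.
Qed.

Lemma lifted_neighbour (M : nat) (a b : int) (x y : nat) : 3 <= M ->
  (a %% M)%Z = x -> (b %% M)%Z = y -> (a <= b + 1)%R -> (b <= a + 1)%R ->
  y = x \/ y = x.+1 %% M ->
  (b = a \/ b = a + 1)%R /\ ((y == x) = (b == a)).
Proof.
move=> M_ge3 ha hb hab hba hyx.
have M1 : 0 < 1 < M by rewrite /= (leq_trans _ M_ge3).
have M2 : 0 < 2 < M by rewrite /= M_ge3.
have ha1 : ((a + 1) %% M)%Z = (x.+1 %% M)%N.
  by rewrite -modz_nat (intS x) [(1 + _)%R]addrC -ha modzDml.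
(* b = a - 1 is impossible: y would be x - 1 modulo M, neither x nor x + 1 *)
have b_ge : (a <= b)%R.
  rewrite leNgt; apply/negP => hlt; have eb : a = (b + 1)%R by lia.
  case: hyx => hyx.
  - by have := modz_shift_neq b M1; rewrite -eb ha hb hyx eqxx.
  - by have := modz_shift_neq b M2; rewrite hb hyx -ha1 eb -addrA eqxx.
have b_cases : (b = a \/ b = a + 1)%R by lia.
split=> //; rewrite -eqz_nat -hb -ha.
case: b_cases => ->; first by rewrite !eqxx.
by rewrite eq_sym (negbTE (modz_shift_neq a M1)); lia.
Qed.

Section Counters.
Variables (f : nat -> int) (b : nat -> bool).
Hypothesis f_step : forall t, f t.+1 = (f t + b t)%R.
Hypothesis b_inf : forall t, exists2 t', t <= t' & b t'.

Lemma counter_mono t t' : t <= t' -> (f t <= f t')%R.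
Proof.
move/subnK <-; elim: (t' - t) => [|m IH] //.
by rewrite addSn f_step; apply: le_trans IH _; rewrite lerDl.
Qed.

Lemma counter_unbounded (N : nat) : exists t, (f 0 + N%:Z <= f t)%R.
Proof.
elim: N => [|N [t ht]]; first by exists 0; rewrite addr0.
have [t' le_tt' bt'] := b_inf t.
exists t'.+1; rewrite f_step bt' intS.
have := counter_mono le_tt'; lia.
Qed.

(* Since the counter moves by unit steps, every level K >= f 0 is hit, and
   there is a first time at which it is hit. *)
Lemma counter_first_hit (K : int) : (f 0 <= K)%R ->
  exists t, f t = K /\ forall t', t' < t -> f t' <> K.
Proof.
move=> f0_le.
have exP : exists t, (K <= f t)%R.
  have [t ht] := counter_unbounded `|K - f 0|%N.
  by exists t; move: ht; rewrite gez0_abs ?subr_ge0 //; lia.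
have [t ht hmin] := ex_minnP exP.
have before t' : t' < t -> (f t' < K)%R.
  by move=> lt_t't; rewrite ltNge; apply/negP => /hmin; rewrite leqNgt lt_t't.
exists t; split; last by move=> t' /before; lia.
case: t ht hmin before => [|s] ht _ before; first by lia.
have := before s (ltnSn s); move: ht; rewrite f_step.
by case: (b s) => /=; lia.
Qed.

End Counters.

Section Unison.
Variables (T : finType) (e : rel T).
Hypotheses (e_sym : symmetric e) (e_conn : forall p q : T, connect e p q).
Variables (rho M : nat).
Hypotheses (M_ge3 : 3 <= M) (delta_dvd_M : rho.+1 %| M).
Variables (S : Type) (op : S -> S -> S).
Hypotheses (opA : associative op) (opC : commutative op) (opI : idempotent_op op).
Variables (v0 : T -> S) (gamma : nat -> config T S) (sel : nat -> {set T}).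
Hypotheses (r_range : forall p, cr (gamma 0) p < M)
  (sel_en : forall t p, p \in sel t -> enabled M e (gamma t) p)
  (trans : forall t, gamma t.+1 = step M rho e op v0 (gamma t) (sel t)).
Variables (delta0 : T -> T -> int) (p0 : T).
Hypothesis delta0_def : forall p q s, path e p s -> last p s = q ->
  delay M (cr (gamma 0)) p s = delta0 p q.

Local Notation base := (fun q => ((cr (gamma 0%N) p0)%:Z + delta0 p0 q)%R).
Local Notation L t q := (clift sel base q t).
Local Notation r t := (cr (gamma t)).

Lemma M_gt0 : 0 < M. Proof. exact: leq_trans M_ge3. Qed.

Lemma liftS t q : L t.+1 q = (L t q + (q \in sel t)%:Z)%R.
Proof. by []. Qed.

(* Initially the lifted clock of q is r p0 + delta0(p0, q), which reduces
   modulo M to the clock of q: compute delta0 along any path p0 ~> q. *)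
Lemma lift0_mod q : ((L 0 q) %% M)%Z = r 0 q.
Proof.
case/connectP: (e_conn p0 q) => s hp hl.
rewrite /= -(delta0_def hp (esym hl)) -modzDmr delay_mod ?M_gt0 // -hl modzDmr.
by rewrite addrC subrK modz_small // ltz_nat r_range.
Qed.

(* Extending a path by one edge adds at most one to the delay. *)
Lemma delta0_edge q q' : e q q' -> (delta0 p0 q' <= delta0 p0 q + 1)%R.
Proof.
move=> hqq'; case/connectP: (e_conn p0 q) => s hp hl.
have hp' : path e p0 (rcons s q') by rewrite rcons_path hp -hl hqq'.
rewrite -(delta0_def hp (esym hl)) -(delta0_def hp' (last_rcons _ _ _)).
by rewrite delay_rcons lerD2l ominus_le1.
Qed.

(* Computing delta0 along a shortest path bounds it by the diameter. *)
Lemma delta0_le_diam q : (delta0 p0 q <= (diam e)%:Z)%R.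
Proof.
have : within e (dist e p0 q) p0 q by rewrite -(dist_leP e_conn).
case/withinP => s [hp hl hs]; rewrite -(delta0_def hp hl).
apply: le_trans (delay_le_size M (r 0) p0 s) _.
by rewrite lez_nat (leq_trans hs) // dist_le_diam.
Qed.

Definition lifted_inv t :=
  (forall q, ((L t q) %% M)%Z = r t q) /\
  (forall q q', e q q' -> (L t q' <= L t q + 1)%R).

Lemma enabled_neighbour t p q : lifted_inv t -> p \in sel t -> e p q ->
  (L t q = L t p \/ L t q = L t p + 1)%R /\
  ((r t q == r t p) = (L t q == L t p)).
Proof.
move=> [hmod hnb] hp hpq.
apply: lifted_neighbour (hmod p) (hmod q) _ (hnb p q hpq) (sel_en hp hpq) => //.
by apply: hnb; rewrite e_sym.
Qed.

Lemma lifted_inv0 : lifted_inv 0.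
Proof.
split=> [q | q q' hqq']; first exact: lift0_mod.
by rewrite /= -addrA lerD2l delta0_edge.
Qed.

Lemma lifted_invS t : lifted_inv t -> lifted_inv t.+1.
Proof.
move=> hI; have [hmod hnb] := hI; split=> [q | q q' hqq'].
- rewrite liftS trans /=; case: (q \in sel t) => /=; last by rewrite addr0.
  by rewrite -modz_nat (intS (r t q)) [(1 + _)%R]addrC -hmod modzDml.
- have := hnb q q' hqq'; rewrite !liftS.
  case: (boolP (q' \in sel t)) => hq'; case: (q \in sel t) => /=; try lia.
  (* only q' moves: q' was enabled, so q was level with it or one ahead *)
  have hq'q : e q' q by rewrite e_sym.
  by have [] := enabled_neighbour hI hq' hq'q; lia.
Qed.

Lemma lifted_inv_all t : lifted_inv t.
Proof. by elim: t => [|t IH]; [exact: lifted_inv0 | exact: lifted_invS]. Qed.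

Lemma lift_residue t q : ((r t q %% rho.+1)%N : int) = ((L t q) %% (rho.+1)%:Z)%Z.
Proof. by rewrite -modz_nat -(lifted_inv_all t).1 modz_mod_dvd. Qed.

Variable U : int.
Hypothesis U_big : ((cr (gamma 0%N) p0)%:Z + (diam e)%:Z + 1 <= U * (rho.+1)%:Z)%R.

(* Initial lifted clocks are at most bot0 + D, hence below U delta. *)
Lemma lift0_lt q : (L 0 q < U * (rho.+1)%:Z)%R.
Proof.
rewrite /= -lezD1; apply: le_trans U_big.
by rewrite lerD2r lerD2l delta0_le_diam.
Qed.

Local Notation inf_ball q j := (bigset op v0 (ball e q j) (v0 q)).

Definition registers_inv t := forall q (j : nat),
  L t q = (U * (rho.+1)%:Z + j%:Z)%R -> j <= rho ->
  cv1 (gamma t) q = inf_ball q j.-1 /\ cv2 (gamma t) q = inf_ball q j.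

Lemma registers_inv0 : registers_inv 0.
Proof. by move=> q j hq _; have := lift0_lt q; rewrite hq; lia. Qed.

Lemma neighbour_reads t q x (j : nat) : registers_inv t -> q \in sel t ->
  L t q = (U * (rho.+1)%:Z + j%:Z)%R -> j < rho -> e q x ->
  (if r t x == r t q then cv2 (gamma t) x else cv1 (gamma t) x) = inf_ball x j.
Proof.
move=> hJ hq hL hj hx.
have [[hLx | hLx] ->] := enabled_neighbour (lifted_inv_all t) hq hx.
- by rewrite hLx eqxx; apply: (hJ x j _ (ltnW hj)).2; rewrite hLx.
- rewrite hLx (_ : (L t q + 1 == L t q)%R = false); last lia.
  by apply: (hJ x j.+1 _ hj).1; rewrite hLx hL; lia.
Qed.

(* A step at lifted clock U delta - 1 (residue rho) resets both registers to
   v0 = inf over V(q, 0); later steps shift v2 into v1 and recompute v2 from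
   the neighbours one radius further. *)
Lemma registers_invS t : registers_inv t -> registers_inv t.+1.
Proof.
move=> hJ q j; rewrite liftS trans /=.
case: (boolP (q \in sel t)) => hq /=; last by rewrite addr0; apply: hJ.
move=> hL hj; have hres := lift_residue t q.
case: j hL hj => [|j] hL hj.
- have hL' : L t q = ((U - 1) * (rho.+1)%:Z + rho%:Z)%R by lia.
  have -> : r t q %% rho.+1 == rho.
    by rewrite -eqz_nat hres hL' modzMDl modz_small ?eqxx // ltz_nat ltnSn.
  by rewrite /= (ball0 e_conn) /bigset enum_set1.
- have hL' : L t q = (U * (rho.+1)%:Z + j%:Z)%R by lia.
  have -> : (r t q %% rho.+1 == rho) = false.
    rewrite -eqz_nat hres hL' modzMDl modz_small ?eqz_nat ?(ltn_eqF hj) //.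
    by rewrite /= ltz_nat ltnS ltnW.
  split; first exact: (hJ q j hL' (ltnW hj)).2.
  apply: (bigset_ballS opA opC opI e_conn) => x hx.
  exact: neighbour_reads hJ hq hL' hj hx.
Qed.

Lemma registers_inv_all t : registers_inv t.
Proof. by elim: t => [|t IH]; [exact: registers_inv0 | exact: registers_invS]. Qed.

End Unison.

Theorem mainTheorem5
  (T : finType) (e : rel T)
  (e_sym : symmetric e) (e_irr : irreflexive e)
  (e_conn : forall p q : T, connect e p q)
  (n_ge2 : 2 <= #|T|)
  (rho M : nat) (rho_ge1 : 1 <= rho) (M_ge3 : 3 <= M) (delta_dvd_M : rho.+1 %| M)
  (S : Type) (op : S -> S -> S)
  (opA : associative op) (opC : commutative op) (opI : idempotent_op op)
  (v0 : T -> S)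
  (gamma : nat -> config T S) (sel : nat -> {set T})
  (r_range : forall p, cr (gamma 0) p < M)
  (sel_ne : forall t, sel t != set0)
  (sel_en : forall t p, p \in sel t -> enabled M e (gamma t) p)
  (trans : forall t, gamma t.+1 = step M rho e op v0 (gamma t) (sel t))
  (fair : forall p t, exists2 t', t <= t' & p \in sel t')
  (* WU_0 in gamma_0, with delta0 p q the common delay of all paths p ~> q *)
  (wu0 : WU M e (cr (gamma 0)))
  (delta0 : T -> T -> int)
  (delta0_def : forall p q s, path e p s -> last p s = q ->
                  delay M (cr (gamma 0)) p s = delta0 p q)
  (p0 : T) (p0_min : forall q, (0 <= delta0 p0 q)%R)
  (U : int) (k : nat) (k_ge1 : 1 <= k) (k_le : k <= rho)
  (U_big : ((cr (gamma 0%N) p0)%:Z + (diam e)%:Z + 1 <= U * (rho.+1)%:Z)%R)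
  (p : T) :
  let base := fun q => ((cr (gamma 0%N) p0)%:Z + delta0 p0 q)%R in
  let K := (U * (rho.+1)%:Z + k%:Z)%R in
  exists t : nat,
    [/\ clift sel base p t = K,
        (forall t', t' < t -> clift sel base p t' <> K),
        cv1 (gamma t) p = bigset op v0 (ball e p k.-1) (v0 p)
      & cv2 (gamma t) p = bigset op v0 (ball e p k) (v0 p)].
Proof.
move=> base K.
(* The lifted clock of p is a counter driven by the fair selections; its
   initial value lies below U delta <= K, so K is hit, a first time t. *)
have [t [hK hfirst]] : exists t, clift sel base p t = K /\
    forall t', t' < t -> clift sel base p t' <> K.
  apply: (@counter_first_hit _ (fun t => p \in sel t)) => [t | t | ].
  - by [].
  - exact: fair.
  - apply/ltW/(lt_le_trans (lift0_lt e_conn sel delta0_def U_big p)).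
    by rewrite lerDl.
have [v1_eq v2_eq] := registers_inv_all e_sym e_conn M_ge3 delta_dvd_M opA opC opI
  r_range sel_en trans delta0_def U_big hK k_le.
by exists t.
Qed.
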